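(* Let $q'>0$, $e'=0$, $q_{\max}>0$, $\mathcal D''_1=\{e:0\le e\le1\}$, $\mathcal D_2=\{(q,\omega):0<q\le q_{\max},\ 0\le\omega\le\pi/2\}$. For each $(q,\omega)\in\mathcal D_2$, $$\min_{e\in\mathcal D''_1}\delta_{\rm nod}=\max\Big\{0,\ q'-\frac{2q}{1-\cos\omega},\ q-q'\Big\},\qquad \max_{e\in\mathcal D''_1}\delta_{\rm nod}=\max\Big\{q'-q,\ \frac{2q}{1+\cos\omega}-q'\Big\}.$$
   Context: Here the trajectory $\mathcal A'$ is a circle of radius $q'$ ($e'=0$), so $r'_+=r'_-=q'$. For $q>0$, $e\in[0,1]$, $\omega$ an angle, define $r_{\pm}=\frac{q(1+e)}{1\pm e\cos\omega}$ (extended-real value $+\infty$ when the denominator vanishes; $\frac{2q}{1-\cos\omega}=+\infty$ at $\omega=0$), $d^\pm=q'-r_\pm$, and the nodal distance $\delta_{\rm nod}(q,e,\omega)=\min\{|d^+|,|d^-|\}$. *)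

(* classical reals. Extended-real values +infinity are
   represented by [None : option R]; [Some x] is the finite value x. *)
From Stdlib Require Import Reals.
Open Scope R_scope.

(* a / b as an extended real, with value +infinity when b = 0
   (only used with a > 0, b >= 0). *)
Definition ediv (a b : R) : option R :=
  if Req_EM_T b 0 then None else Some (a / b).

Definition r_plus (q e w : R) : option R := ediv (q * (1 + e)) (1 + e * cos w).
Definition r_minus (q e w : R) : option R := ediv (q * (1 + e)) (1 - e * cos w).

Definition abs_d (q' : R) (r : option R) : option R :=
  match r with None => None | Some x => Some (Rabs (q' - x)) end.

Definition emin (a b : option R) : option R :=
  match a, b with
  | None, _ => b
  | _, None => a
  | Some x, Some y => Some (Rmin x y)
  end.

Definition ege (a : option R) (x : R) : Prop :=
  match a with None => True | Some y => x <= y end.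

(* nodal distance for the circular trajectory A' of radius q' *)
Definition delta_nod (q' q e w : R) : option R :=
  emin (abs_d q' (r_plus q e w)) (abs_d q' (r_minus q e w)).

Definition is_min_on_01 (f : R -> option R) (m : R) : Prop :=
  (exists e, 0 <= e <= 1 /\ f e = Some m) /\
  (forall e, 0 <= e <= 1 -> ege (f e) m).

Definition is_max_on_01 (f : R -> option R) (m : R) : Prop :=
  (exists e, 0 <= e <= 1 /\ f e = Some m) /\
  (forall e, 0 <= e <= 1 -> exists y, f e = Some y /\ y <= m).

(* With c = cos w in [0, 1], for every e in [0, 1] the radius r_+ lies in
   [q, 2q/(1+c)] and the radius r_-, when finite, lies in [q, 2q/(1-c)]
   (unbounded above when c = 1).  So delta_nod is at least the distance from
   q' to [q, 2q/(1-c)] and at most the larger of the distances from q' to the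
   ends of [q, 2q/(1+c)].  Both bounds are attained: the minimum at e = 0, at
   the eccentricity where r_- = q', or at e = 1; the maximum at e = 0 or at
   e = 1. *)

From Stdlib Require Import Reals Lra.
Open Scope R_scope.

Ltac Rminmax_cases :=
  unfold Rmax, Rmin, Rabs in *;
  repeat match goal with
         | |- context [Rle_dec ?a ?b] => destruct (Rle_dec a b)
         | H : context [Rle_dec ?a ?b] |- _ => destruct (Rle_dec a b)
         | |- context [Rcase_abs ?a] => destruct (Rcase_abs a)
         | H : context [Rcase_abs ?a] |- _ => destruct (Rcase_abs a)
         end;
  lra.

Lemma Rle_div_r (a b d : R) : 0 < d -> a * d <= b -> a <= b / d.
Proof.
  intros Hd H. apply Rmult_le_reg_r with d; [lra|].
  unfold Rdiv. rewrite Rmult_assoc, Rinv_l by lra. lra.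
Qed.

Lemma Rle_div_l (a b d : R) : 0 < d -> b <= a * d -> b / d <= a.
Proof.
  intros Hd H. apply Rmult_le_reg_r with d; [lra|].
  unfold Rdiv. rewrite Rmult_assoc, Rinv_l by lra. lra.
Qed.

Lemma Rabs_sub_ge_dist (q' lo x : R) :
  lo <= x -> Rmax 0 (lo - q') <= Rabs (q' - x).
Proof. intros. Rminmax_cases. Qed.

Lemma Rabs_sub_ge_dist_interval (q' lo hi x : R) :
  lo <= x <= hi -> Rmax 0 (Rmax (q' - hi) (lo - q')) <= Rabs (q' - x).
Proof. intros. Rminmax_cases. Qed.

Lemma Rabs_sub_le_dist_ends (q' lo hi x : R) :
  lo <= x <= hi -> Rabs (q' - x) <= Rmax (q' - lo) (hi - q').
Proof. intros. Rminmax_cases. Qed.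

Lemma ege_emin_abs_d (q' m : R) (r1 r2 : option R) :
  (forall x, r1 = Some x -> m <= Rabs (q' - x)) ->
  (forall x, r2 = Some x -> m <= Rabs (q' - x)) ->
  ege (emin (abs_d q' r1) (abs_d q' r2)) m.
Proof.
  intros H1 H2.
  destruct r1 as [x1|], r2 as [x2|]; simpl; auto.
  apply Rmin_glb; auto.
Qed.

Lemma emin_Some_l_le (a : R) (b : option R) :
  exists y, emin (Some a) b = Some y /\ y <= a.
Proof.
  destruct b as [y|]; simpl.
  - exists (Rmin a y). split; [reflexivity | apply Rmin_l].
  - exists a. split; [reflexivity | apply Rle_refl].
Qed.

Section NodalDistance.

Variables (q' q w : R).
Hypotheses (Hq' : 0 < q') (Hq : 0 < q) (Hcos0 : 0 <= cos w) (Hcos1 : cos w <= 1).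

Lemma r_plus_eq (e : R) :
  0 <= e -> r_plus q e w = Some (q * (1 + e) / (1 + e * cos w)).
Proof.
  intros He. unfold r_plus, ediv.
  destruct (Req_EM_T (1 + e * cos w) 0); [nra | reflexivity].
Qed.

Lemma r_plus_range (e : R) : 0 <= e <= 1 ->
  q <= q * (1 + e) / (1 + e * cos w) <= 2 * q / (1 + cos w).
Proof.
  intros He. split.
  - apply Rle_div_r; [nra|].
    assert (0 <= q * e * (1 - cos w)) by (apply Rmult_le_pos; nra). nra.
  - apply Rle_div_l; [nra|].
    set (Y := 2 * q / (1 + cos w)).
    assert (HY : Y * (1 + cos w) = 2 * q) by (unfold Y; field; lra).
    assert (0 <= (1 - cos w) * (1 - e)) by nra.
    assert (0 <= Y) by (apply Rle_div_r; lra).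
    nra.
Qed.

Lemma r_minus_ge (e x : R) : 0 <= e <= 1 -> r_minus q e w = Some x -> q <= x.
Proof.
  intros He. unfold r_minus, ediv.
  destruct (Req_EM_T (1 - e * cos w) 0) as [|Hne]; intros [= <-]; [].
  apply Rle_div_r; [nra|].
  assert (0 <= q * e * (1 + cos w)) by (apply Rmult_le_pos; nra). nra.
Qed.

Lemma r_minus_le (e x : R) : 0 <= e <= 1 -> cos w < 1 ->
  r_minus q e w = Some x -> x <= 2 * q / (1 - cos w).
Proof.
  intros He Hc. unfold r_minus, ediv.
  destruct (Req_EM_T (1 - e * cos w) 0); intros [= <-]; [].
  apply Rle_div_l; [nra|].
  set (X := 2 * q / (1 - cos w)).
  assert (HX : X * (1 - cos w) = 2 * q) by (unfold X; field; lra).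
  assert (0 <= (1 + cos w) * (1 - e)) by nra.
  assert (0 <= X) by (apply Rle_div_r; lra).
  nra.
Qed.

Lemma r_plus_bound_le_r_minus_bound : cos w < 1 ->
  2 * q / (1 + cos w) <= 2 * q / (1 - cos w).
Proof.
  intros Hc. unfold Rdiv. apply Rmult_le_compat_l; [lra|].
  apply Rinv_le_contravar; lra.
Qed.

Lemma delta_nod_at_0 : delta_nod q' q 0 w = Some (Rabs (q' - q)).
Proof.
  unfold delta_nod, r_plus, r_minus, ediv.
  replace (1 + 0 * cos w) with 1 by ring. replace (1 - 0 * cos w) with 1 by ring.
  destruct (Req_EM_T 1 0); [lra|]. simpl.
  replace (q * (1 + 0) / 1) with q by field.
  now rewrite Rmin_left by lra.
Qed.

Lemma delta_nod_at_1 : cos w < 1 ->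
  delta_nod q' q 1 w =
  Some (Rmin (Rabs (q' - 2 * q / (1 + cos w))) (Rabs (q' - 2 * q / (1 - cos w)))).
Proof.
  intros Hc. unfold delta_nod, r_plus, r_minus, ediv.
  replace (1 + 1 * cos w) with (1 + cos w) by ring.
  replace (1 - 1 * cos w) with (1 - cos w) by ring.
  replace (q * (1 + 1)) with (2 * q) by ring.
  destruct (Req_EM_T (1 + cos w) 0); [lra|].
  destruct (Req_EM_T (1 - cos w) 0); [lra|].
  reflexivity.
Qed.

Lemma delta_nod_zero : q <= q' -> q' * (1 - cos w) <= 2 * q ->
  exists e, 0 <= e <= 1 /\ delta_nod q' q e w = Some 0.
Proof.
  intros Hle H2.
  set (c := cos w) in *.
  set (e0 := (q' - q) / (q + q' * c)).
  assert (Hd : 0 < q + q' * c) by nra.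
  assert (E : 1 - e0 * c = q * (1 + c) / (q + q' * c)) by (unfold e0; field; lra).
  assert (Hpos : 0 < q * (1 + c) / (q + q' * c)) by (apply Rdiv_lt_0_compat; nra).
  assert (He0 : 0 <= e0 <= 1).
  { split; [apply Rle_div_r|apply Rle_div_l]; lra. }
  exists e0. split; [exact He0|].
  unfold delta_nod. rewrite r_plus_eq by lra.
  unfold r_minus, ediv. fold c.
  destruct (Req_EM_T (1 - e0 * c) 0); [lra|].
  replace (q * (1 + e0) / (1 - e0 * c)) with q'.
  - simpl. rewrite Rminus_diag, Rabs_R0.
    rewrite Rmin_right by apply Rabs_pos. reflexivity.
  - rewrite E. unfold e0. field. nra.
Qed.

Lemma delta_nod_ge (e : R) : 0 <= e <= 1 ->
  ege (delta_nod q' q e w) (Rmax 0 (q - q')).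
Proof.
  intros He. apply ege_emin_abs_d; intros x Hx.
  - rewrite r_plus_eq in Hx by lra. injection Hx as <-.
    apply Rabs_sub_ge_dist, r_plus_range, He.
  - apply Rabs_sub_ge_dist. exact (r_minus_ge e x He Hx).
Qed.

Lemma delta_nod_ge_interval (e : R) : 0 <= e <= 1 -> cos w < 1 ->
  ege (delta_nod q' q e w)
      (Rmax 0 (Rmax (q' - 2 * q / (1 - cos w)) (q - q'))).
Proof.
  intros He Hc.
  pose proof (r_plus_bound_le_r_minus_bound Hc) as HYX.
  apply ege_emin_abs_d; intros x Hx; apply Rabs_sub_ge_dist_interval.
  - rewrite r_plus_eq in Hx by lra. injection Hx as <-.
    pose proof (r_plus_range e He). lra.
  - split; [exact (r_minus_ge e x He Hx) | exact (r_minus_le e x He Hc Hx)].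
Qed.

Lemma delta_nod_le (e : R) : 0 <= e <= 1 ->
  exists y, delta_nod q' q e w = Some y /\
            y <= Rmax (q' - q) (2 * q / (1 + cos w) - q').
Proof.
  intros He. unfold delta_nod. rewrite r_plus_eq by lra. simpl.
  destruct (emin_Some_l_le (Rabs (q' - q * (1 + e) / (1 + e * cos w)))
                           (abs_d q' (r_minus q e w))) as (y & Hy & Hle).
  exists y. split; [exact Hy|].
  eapply Rle_trans; [exact Hle|].
  apply Rabs_sub_le_dist_ends, r_plus_range, He.
Qed.

Lemma delta_nod_min_attained_cos_eq1 : cos w = 1 ->
  exists e, 0 <= e <= 1 /\ delta_nod q' q e w = Some (Rmax 0 (q - q')).
Proof.
  intros Hc.
  destruct (Rle_lt_dec q q') as [Hle|Hlt].
  - destruct delta_nod_zero as (e & He & Hzero); [lra | rewrite Hc; lra |].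
    exists e. split; [exact He|]. rewrite Hzero. f_equal. Rminmax_cases.
  - exists 0. split; [lra|]. rewrite delta_nod_at_0. f_equal. Rminmax_cases.
Qed.

Lemma delta_nod_min_attained_cos_lt1 : cos w < 1 ->
  exists e, 0 <= e <= 1 /\
    delta_nod q' q e w = Some (Rmax 0 (Rmax (q' - 2 * q / (1 - cos w)) (q - q'))).
Proof.
  intros Hc.
  set (X := 2 * q / (1 - cos w)).
  assert (HqX : q <= X) by (apply Rle_div_r; nra).
  destruct (Rlt_le_dec q' q) as [Hlt|Hle].
  { exists 0. split; [lra|]. rewrite delta_nod_at_0. f_equal. Rminmax_cases. }
  destruct (Rle_lt_dec (q' * (1 - cos w)) (2 * q)) as [H2|H2].
  - assert (q' <= X) by (apply Rle_div_r; lra).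
    destruct (delta_nod_zero Hle H2) as (e & He & Hzero).
    exists e. split; [exact He|]. rewrite Hzero. f_equal. Rminmax_cases.
  - assert (HXq' : X < q').
    { apply Rmult_lt_reg_r with (1 - cos w); [lra|].
      unfold X, Rdiv. rewrite Rmult_assoc, Rinv_l by lra. lra. }
    pose proof (r_plus_bound_le_r_minus_bound Hc) as HYX. fold X in HYX.
    exists 1. split; [lra|]. rewrite delta_nod_at_1 by exact Hc. fold X.
    f_equal. Rminmax_cases.
Qed.

Lemma delta_nod_max_attained :
  exists e, 0 <= e <= 1 /\
    delta_nod q' q e w = Some (Rmax (q' - q) (2 * q / (1 + cos w) - q')).
Proof.
  set (Y := 2 * q / (1 + cos w)).
  assert (HqY : q <= Y) by (apply Rle_div_r; nra).
  destruct (Req_dec (cos w) 1) as [Hc|Hc].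
  - assert (HY : Y = q) by (unfold Y; rewrite Hc; field).
    exists 0. split; [lra|]. rewrite delta_nod_at_0, HY. f_equal. Rminmax_cases.
  - destruct (Rle_lt_dec (Y - q') (q' - q)) as [H|H].
    + exists 0. split; [lra|]. rewrite delta_nod_at_0. f_equal. Rminmax_cases.
    + pose proof (r_plus_bound_le_r_minus_bound ltac:(lra)) as HYX. fold Y in HYX.
      exists 1. split; [lra|]. rewrite delta_nod_at_1 by lra. fold Y.
      f_equal. Rminmax_cases.
Qed.

End NodalDistance.

Theorem proposition8 (q' qmax q w : R) :
  0 < q' -> 0 < qmax ->
  0 < q <= qmax -> 0 <= w <= PI / 2 ->
  is_min_on_01 (fun e => delta_nod q' q e w)
    (match ediv (2 * q) (1 - cos w) with
     | None => Rmax 0 (q - q')                      (* q' - (+infinity) = -infinity *)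
     | Some x => Rmax 0 (Rmax (q' - x) (q - q'))
     end) /\
  is_max_on_01 (fun e => delta_nod q' q e w)
    (Rmax (q' - q) (2 * q / (1 + cos w) - q')).
Proof.
  intros Hq' _ [Hq _] Hw.
  assert (Hcos0 : 0 <= cos w) by (apply cos_ge_0; pose proof PI_RGT_0; lra).
  assert (Hcos1 : cos w <= 1) by (pose proof (COS_bound w); lra).
  split; [|split].
  - unfold ediv. destruct (Req_EM_T (1 - cos w) 0) as [Hc|Hc]; split.
    + apply delta_nod_min_attained_cos_eq1; lra.
    + intros e He. apply delta_nod_ge; auto.
    + apply delta_nod_min_attained_cos_lt1; lra.
    + intros e He. apply delta_nod_ge_interval; auto. lra.
  - apply delta_nod_max_attained; auto.
  - intros e He. apply delta_nod_le; auto.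
Qed.
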